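(* Let $X$ be a complete metric space and $\mathcal Z_{\mathcal S}=(X,(\phi_j)_{j=0}^{n-1},(\rho_j)_{j=0}^{n-1})$ a Matkowski contractive GIFZS of degree $m$ with a proper family $(\rho_j)$, and let $u_{\mathcal Z}$ be its fuzzy attractor. Let $I=\{j:\rho_j(1)=1\}$, $\mathcal S=(X,(\phi_j)_{j=0}^{n-1})$ and $\mathcal S'=(X,(\phi_j)_{j\in I})$. Then $[u_{\mathcal Z}]^0=A_{\mathcal S}$ and $[u_{\mathcal Z}]^1=A_{\mathcal S'}$.
   Context: A fuzzy subset of $X$ is $u:X\to[0,1]$. For $\alpha\in(0,1]$, $[u]^\alpha=\{x:u(x)\ge\alpha\}$, $[u]^0=\overline{\{x:u(x)>0\}}$. $\mathcal F_X^*$: fuzzy subsets that are normal, usc and compactly supported. $X^m$ has the maximum metric $d^m$. For $T:Z\to Y$, $T(u)(y)=\sup\{u(z):T(z)=y\}$ if $y\in T(Z)$, else $0$; $\rho(u)=\rho\circ u$; $(u_0\times\cdots\times u_{m-1})(x_0,\dots,x_{m-1})=\min_iu_i(x_i)$; $\vee$ is pointwise max. A family $(\rho_j)$ of maps $[0,1]\to[0,1]$ is admissible if each is nondecreasing, right continuous, $\rho_j(0)=0$, and $\rho_j(1)=1$ for some $j$. For each $j$: $r_+^j=\inf\{t:\rho_j(t)>0\}$ and $\beta_j(\alpha)=\inf\{t\in[0,1]:\rho_j(t)\ge\alpha\}$ for $\alpha\in[0,\rho_j(1)]$. An admissible family is proper if $r_+^j=0$ and $\beta_j(\rho_j(1))=1$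 for all $j$. A GIFS of degree $m$ is $(X,(\phi_j))$ with continuous $\phi_j:X^m\to X$; it is Matkowski contractive if each $\phi_j$ satisfies $d(\phi_j(x),\phi_j(y))\le\varphi_j(d^m(x,y))$ for some nondecreasing $\varphi_j$ with $\varphi_j^{(k)}(t)\to0$ for all $t>0$; on complete $X$ its attractor $A_{\mathcal S}$ is the unique nonempty compact $A$ with $A=\bigcup_j\phi_j(A\times\cdots\times A)$. The GIFZS operator is $\mathcal Z_{\mathcal S}(u_0,\dots,u_{m-1})=\bigvee_j\rho_j(\phi_j(u_0\times\cdots\times u_{m-1}))$ and the fuzzy attractor is the unique $u_{\mathcal Z}\in\mathcal F_X^*$ with $\mathcal Z_{\mathcal S}(u_{\mathcal Z},\dots,u_{\mathcal Z})=u_{\mathcal Z}$. *)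

From Stdlib Require Import Reals Lra ClassicalEpsilon List.
Open Scope R_scope.

Definition is_glb (E : R -> Prop) (l : R) : Prop :=
  (forall x, E x -> l <= x) /\ (forall b, (forall x, E x -> b <= x) -> b <= l).

(* sup in [0,1]: the least upper bound if it exists, else 0 (so sup of the empty set is 0). *)
Definition sup01 (E : R -> Prop) : R :=
  match excluded_middle_informative (exists l, is_lub E l) with
  | left H => proj1_sig (constructive_indefinite_description _ H)
  | right _ => 0
  end.

(* inf in [0,1]: the greatest lower bound if it exists, else 1 (so inf of the empty set is 1). *)
Definition inf01 (E : R -> Prop) : R :=
  match excluded_middle_informative (exists l, is_glb E l) with
  | left H => proj1_sig (constructive_indefinite_description _ H)
  | right _ => 1
  end.

Section Metric.
Variable X : Metric_Space.
Local Notation P := (Base X).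
Local Notation d := (dist X).

Definition Cauchy_seq (s : nat -> P) : Prop :=
  forall eps, eps > 0 -> exists N, forall p q, (p >= N)%nat -> (q >= N)%nat -> d (s p) (s q) < eps.
Definition converges (s : nat -> P) (l : P) : Prop :=
  forall eps, eps > 0 -> exists N, forall p, (p >= N)%nat -> d (s p) l < eps.
Definition complete : Prop :=
  forall s, Cauchy_seq s -> exists l, converges s l.

Definition open_set (U : P -> Prop) : Prop :=
  forall x, U x -> exists eps, eps > 0 /\ forall y, d x y < eps -> U y.

Definition compact (A : P -> Prop) : Prop :=
  forall (I : Type) (U : I -> P -> Prop),
    (forall i, open_set (U i)) ->
    (forall x, A x -> exists i, U i x) ->
    exists l : list I, forall x, A x -> exists i, In i l /\ U i x.

Definition closure (S : P -> Prop) (x : P) : Prop :=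
  forall eps, eps > 0 -> exists y, S y /\ d x y < eps.

Definition cut (u : P -> R) (alpha : R) (x : P) : Prop := u x >= alpha.
Definition cut0 (u : P -> R) : P -> Prop := closure (fun x => u x > 0).

Definition usc (u : P -> R) : Prop :=
  forall x eps, eps > 0 -> exists delta, delta > 0 /\
    forall y, d x y < delta -> u y < u x + eps.

Definition in_Fstar (u : P -> R) : Prop :=
  (forall x, 0 <= u x <= 1) /\ (exists x, u x = 1) /\ usc u /\ compact (cut0 u).
End Metric.

Definition Idx (m : nat) : Type := {i : nat | (i < m)%nat}.

Definition dmax (X : Metric_Space) (m : nat) (x y : Idx m -> Base X) : R :=
  sup01 (fun r => exists i : Idx m, r = dist X (x i) (y i)).

Definition continuous_m (X : Metric_Space) (m : nat) (f : (Idx m -> Base X) -> Base X) : Prop :=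
  forall x eps, eps > 0 -> exists delta, delta > 0 /\
    forall y, dmax X m x y < delta -> dist X (f x) (f y) < eps.

Definition matkowski (X : Metric_Space) (m : nat) (f : (Idx m -> Base X) -> Base X) : Prop :=
  exists vphi : R -> R,
    (forall t, 0 <= t -> 0 <= vphi t) /\
    (forall s t, 0 <= s -> s <= t -> vphi s <= vphi t) /\
    (forall t, t > 0 -> Un_cv (fun k => Nat.iter k vphi t) 0) /\
    (forall x y, dist X (f x) (f y) <= vphi (dmax X m x y)).

Definition fimg {Z Y : Type} (T : Z -> Y) (u : Z -> R) (y : Y) : R :=
  match excluded_middle_informative (exists z, T z = y) with
  | left _ => sup01 (fun r => exists z, T z = y /\ r = u z)
  | right _ => 0
  end.

Definition fprod {Y : Type} (m : nat) (u : Idx m -> Y -> R) (x : Idx m -> Y) : R :=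
  inf01 (fun r => exists i : Idx m, r = u i (x i)).

Definition Zop (X : Metric_Space) (m n : nat)
  (phi : nat -> (Idx m -> Base X) -> Base X) (rho : nat -> R -> R)
  (u : Idx m -> Base X -> R) (x : Base X) : R :=
  sup01 (fun r => exists j, (j < n)%nat /\ r = rho j (fimg (phi j) (fprod m u) x)).

Definition admissible (n : nat) (rho : nat -> R -> R) : Prop :=
  (forall j, (j < n)%nat ->
     (forall t, 0 <= t <= 1 -> 0 <= rho j t <= 1) /\
     (forall s t, 0 <= s -> s <= t -> t <= 1 -> rho j s <= rho j t) /\
     (forall t, 0 <= t < 1 -> forall eps, eps > 0 -> exists delta, delta > 0 /\
        forall s, t <= s -> s < t + delta -> s <= 1 -> Rabs (rho j s - rho j t) < eps) /\
     rho j 0 = 0) /\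
  (exists j, (j < n)%nat /\ rho j 1 = 1).

(* r_+^j = inf{t in [0,1] : rho_j t > 0} = 0  and  beta_j(rho_j 1) = inf{t in [0,1] : rho_j t >= rho_j 1} = 1 *)
Definition proper (n : nat) (rho : nat -> R -> R) : Prop :=
  admissible n rho /\
  forall j, (j < n)%nat ->
    is_glb (fun t => 0 <= t <= 1 /\ rho j t > 0) 0 /\
    is_glb (fun t => 0 <= t <= 1 /\ rho j t >= rho j 1) 1.

Definition hutch_fixed (X : Metric_Space) (m : nat) (J : nat -> Prop)
  (phi : nat -> (Idx m -> Base X) -> Base X) (A : Base X -> Prop) : Prop :=
  forall x, A x <-> exists j, J j /\ exists a : Idx m -> Base X, (forall i, A (a i)) /\ phi j a = x.

Definition is_attractor (X : Metric_Space) (m : nat) (J : nat -> Prop)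
  (phi : nat -> (Idx m -> Base X) -> Base X) (A : Base X -> Prop) : Prop :=
  (exists x, A x) /\ compact X A /\ hutch_fixed X m J phi A /\
  (forall B, (exists x, B x) -> compact X B -> hutch_fixed X m J phi B -> forall x, B x <-> A x).

Definition is_fuzzy_attractor (X : Metric_Space) (m n : nat)
  (phi : nat -> (Idx m -> Base X) -> Base X) (rho : nat -> R -> R) (u : Base X -> R) : Prop :=
  in_Fstar X u /\ (forall x, Zop X m n phi rho (fun _ => u) x = u x) /\
  (forall v, in_Fstar X v -> (forall x, Zop X m n phi rho (fun _ => v) x = v x) -> forall x, v x = u x).

From Pilot Require Import Defs.
From Stdlib Require Import Reals Lra Lia ClassicalEpsilon Classical List.
Open Scope R_scope.

(** Both cuts of [u] are nonempty compact sets (normality, upper semicontinuity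
    and compact support), so by uniqueness of attractors it suffices to show
    that they solve the Hutchinson equations of [S] and [S'].  Properness makes
    [rho_j] faithful at both ends: [rho_j t > 0] iff [t > 0] (as [r_+ = 0]),
    and [rho_j t = 1] forces [t = 1] and [rho_j 1 = 1] (as [beta_j (rho_j 1) = 1]).
    Hence a point of positive (resp. full) membership is, up to an arbitrarily
    small error (resp. exactly), an image [phi_j a] of a tuple of positive
    (resp. almost full) membership, with [j] arbitrary (resp. [j] in [I]).
    Compactness of [[u]^0] yields a convergent subsequence of such tuples,
    continuity of [phi_j] passes the equation to the limit, and upper
    semicontinuity keeps the limit tuple in [[u]^1]. *)

Lemma sup01_spec (E : R -> Prop) :
  is_lub E (sup01 E) \/ (~ (exists l, is_lub E l) /\ sup01 E = 0).
Proof.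
  unfold sup01; destruct (excluded_middle_informative _) as [H | H].
  - left; exact (proj2_sig (constructive_indefinite_description _ H)).
  - right; auto.
Qed.

Lemma inf01_spec (E : R -> Prop) :
  is_glb E (inf01 E) \/ (~ (exists l, is_glb E l) /\ inf01 E = 1).
Proof.
  unfold inf01; destruct (excluded_middle_informative _) as [H | H].
  - left; exact (proj2_sig (constructive_indefinite_description _ H)).
  - right; auto.
Qed.

Lemma is_lub_exists (E : R -> Prop) c r0 :
  (forall r, E r -> r <= c) -> E r0 -> exists l, is_lub E l.
Proof.
  intros Hc H0; destruct (completeness E) as [l Hl];
    [exists c; exact Hc | exists r0; exact H0 | exists l; exact Hl].
Qed.

Lemma is_glb_exists (E : R -> Prop) c r0 :
  (forall r, E r -> c <= r) -> E r0 -> exists l, is_glb E l.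
Proof.
  intros Hc H0.
  destruct (completeness (fun y => E (- y))) as [l [Hub Hleast]].
  - exists (- c); intros r Hr; apply Hc in Hr; lra.
  - exists (- r0); rewrite Ropp_involutive; exact H0.
  - exists (- l); split.
    + intros x Hx.
      assert (- x <= l) by (apply Hub; rewrite Ropp_involutive; exact Hx); lra.
    + intros b Hb.
      assert (l <= - b) by (apply Hleast; intros y Hy; apply Hb in Hy; lra); lra.
Qed.

Lemma sup01_le (E : R -> Prop) c :
  (forall r, E r -> r <= c) -> sup01 E <= Rmax c 0.
Proof.
  intros Hc; destruct (sup01_spec E) as [[_ Hleast] | [_ ->]].
  - apply Hleast; intros r Hr; apply Hc in Hr; pose proof (Rmax_l c 0); lra.
  - apply Rmax_r.
Qed.

Lemma sup01_ge (E : R -> Prop) c r0 :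
  (forall r, E r -> r <= c) -> E r0 -> r0 <= sup01 E.
Proof.
  intros Hc H0; destruct (sup01_spec E) as [[Hub _] | [Hno _]].
  - exact (Hub r0 H0).
  - exfalso; exact (Hno (is_lub_exists E c r0 Hc H0)).
Qed.

Lemma inf01_le (E : R -> Prop) c r0 :
  (forall r, E r -> c <= r) -> E r0 -> inf01 E <= r0.
Proof.
  intros Hc H0; destruct (inf01_spec E) as [[Hlb _] | [Hno _]].
  - exact (Hlb r0 H0).
  - exfalso; exact (Hno (is_glb_exists E c r0 Hc H0)).
Qed.

Lemma inf01_ge (E : R -> Prop) c :
  (forall r, E r -> c <= r) -> c <= 1 -> c <= inf01 E.
Proof.
  intros Hc H1; destruct (inf01_spec E) as [[_ Hgreatest] | [_ ->]]; auto.
Qed.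

Lemma inf01_in_01 (E : R -> Prop) :
  (forall r, E r -> 0 <= r <= 1) -> 0 <= inf01 E <= 1.
Proof.
  intros H01; destruct (inf01_spec E) as [[Hlb Hgreatest] | [_ ->]]; [| lra].
  split.
  - apply Hgreatest; intros r Hr; apply H01, Hr.
  - destruct (classic (exists r, E r)) as [[r Hr] | Hempty].
    + pose proof (Hlb r Hr); pose proof (H01 r Hr); lra.
    + (* every real bounds the empty set from below, so no glb exists *)
      assert (inf01 E + 1 <= inf01 E); [| lra].
      apply Hgreatest; intros r Hr; exfalso; eauto.
Qed.

Lemma nat_argmax (f : nat -> R) n :
  (0 < n)%nat -> exists i, (i < n)%nat /\ forall k, (k < n)%nat -> f k <= f i.
Proof.
  induction n as [| n IH]; intros Hn; [lia |].
  destruct (Nat.eq_dec n 0) as [-> | Hn0].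
  - exists 0%nat; split; [lia |]; intros k Hk; replace k with 0%nat by lia; lra.
  - destruct IH as [i [Hi Hmax]]; [lia |].
    destruct (Rle_dec (f n) (f i)).
    + exists i; split; [lia |]; intros k Hk.
      destruct (Nat.eq_dec k n); [subst; auto | apply Hmax; lia].
    + exists n; split; [lia |]; intros k Hk.
      destruct (Nat.eq_dec k n); [subst; lra |].
      pose proof (Hmax k ltac:(lia)); lra.
Qed.

Lemma sup01_le_finite_max (g : nat -> R) n :
  (0 < n)%nat -> (forall j, (j < n)%nat -> 0 <= g j) ->
  exists j, (j < n)%nat /\ sup01 (fun r => exists j, (j < n)%nat /\ r = g j) <= g j.
Proof.
  intros Hn Hg; destruct (nat_argmax g n Hn) as [i [Hi Hmax]].
  exists i; split; auto.
  rewrite <- (Rmax_left (g i) 0) by (apply Rge_le, Rle_ge, Hg, Hi).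
  apply sup01_le; intros r [j [Hj ->]]; auto.
Qed.

Lemma Idx_pos_lower_bound m (g : Idx m -> R) :
  (forall i, 0 < g i) -> exists c, 0 < c <= 1 /\ forall i, c <= g i.
Proof.
  intros Hg.
  set (h k := match Compare_dec.lt_dec k m with
              | left hk => g (exist _ k hk) | right _ => 1 end).
  assert (Hh : forall k (hk : (k < m)%nat), h k = g (exist _ k hk)).
  { intros k hk; unfold h; destruct (Compare_dec.lt_dec k m) as [hk' |]; [| lia].
    rewrite (Peano_dec.le_unique _ _ hk' hk); reflexivity. }
  destruct (Nat.eq_dec m 0) as [Hm0 | Hm0].
  - exists 1; split; [lra |]; intros [i hi]; lia.
  - destruct (nat_argmax (fun k => - h k) m ltac:(lia)) as [i0 [Hi0 Hmin]].
    exists (Rmin (h i0) 1); split.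
    + rewrite (Hh i0 Hi0); pose proof (Hg (exist _ i0 Hi0)).
      unfold Rmin; destruct (Rle_dec _ _); lra.
    + intros [i hi]; pose proof (Hmin i hi); rewrite (Hh i hi) in *.
      pose proof (Rmin_l (h i0) 1); lra.
Qed.

Lemma pigeonhole_infinitely_often n (f : nat -> nat) :
  (forall k, (f k < n)%nat) ->
  exists j, (j < n)%nat /\ forall N, exists k, (k >= N)%nat /\ f k = j.
Proof.
  revert f; induction n as [| n IH]; intros f Hf; [specialize (Hf 0%nat); lia |].
  destruct (classic (forall N, exists k, (k >= N)%nat /\ f k = n)) as [Hn | Hn].
  - exists n; split; auto.
  - apply not_all_ex_not in Hn; destruct Hn as [N0 HN0].
    assert (Hf' : forall k, (f (k + N0) < n)%nat).
    { intros k; specialize (Hf (k + N0)%nat).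
      destruct (Nat.eq_dec (f (k + N0)%nat) n); [| lia].
      exfalso; apply HN0; exists (k + N0)%nat; split; [lia | auto]. }
    destruct (IH _ Hf') as [j [Hj Hinf]]; exists j; split; [lia |].
    intros N; destruct (Hinf N) as [k [Hk Hfk]]; exists (k + N0)%nat; split; [lia | auto].
Qed.

Lemma inv_INR_S_pos k : 0 < / INR (S k).
Proof. apply Rinv_0_lt_compat, lt_0_INR; lia. Qed.

Lemma inv_INR_S_le_1 k : / INR (S k) <= 1.
Proof.
  rewrite <- Rinv_1; apply Rinv_le_contravar; [lra |].
  rewrite S_INR; pose proof (pos_INR k); lra.
Qed.

Lemma inv_INR_S_small eps :
  eps > 0 -> exists N, forall k, (k >= N)%nat -> / INR (S k) < eps.
Proof.
  intros He; destruct (archimed_cor1 eps He) as [N [HN HN0]].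
  exists N; intros k Hk; eapply Rle_lt_trans; [| exact HN].
  apply Rinv_le_contravar; [apply lt_0_INR; lia | apply le_INR; lia].
Qed.

Section Metric.
Variable X : Metric_Space.
Local Notation P := (Base X).
Local Notation d := (dist X).

Lemma dist_nonneg x y : 0 <= d x y.
Proof. pose proof (dist_pos X x y); lra. Qed.

Lemma dist_self x : d x x = 0.
Proof. apply (dist_refl X); reflexivity. Qed.

Lemma converges_unique s l l' : converges X s l -> converges X s l' -> l = l'.
Proof.
  intros Hl Hl'; apply (dist_refl X); pose proof (dist_nonneg l l').
  destruct (Req_dec (d l l') 0) as [| Hne]; auto; exfalso.
  destruct (Hl (d l l' / 2)) as [N1 HN1]; [lra |].
  destruct (Hl' (d l l' / 2)) as [N2 HN2]; [lra |].
  specialize (HN1 (Nat.max N1 N2) ltac:(lia)); specialize (HN2 (Nat.max N1 N2) ltac:(lia)).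
  pose proof (dist_tri X l l' (s (Nat.max N1 N2))); rewrite dist_sym in HN1; lra.
Qed.

Lemma converges_reindex s l (sg : nat -> nat) :
  (forall k, (k <= sg k)%nat) -> converges X s l -> converges X (fun k => s (sg k)) l.
Proof.
  intros Hsg Hl eps He; destruct (Hl eps He) as [N HN].
  exists N; intros k Hk; apply HN; specialize (Hsg k); lia.
Qed.

Lemma converges_of_inv_bound s l :
  (forall k, d (s k) l < / INR (S k)) -> converges X s l.
Proof.
  intros Hs eps He; destruct (inv_INR_S_small eps He) as [N HN].
  exists N; intros k Hk; specialize (HN k Hk); specialize (Hs k); lra.
Qed.

Fixpoint max_index (l : list (P * R * nat)) : nat :=
  match l with nil => 0%nat | t :: l' => Nat.max (snd t) (max_index l') end.

Lemma max_index_ge l t : In t l -> (snd t <= max_index l)%nat.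
Proof.
  induction l as [| t' l IH]; simpl; [contradiction |].
  intros [<- | Hin]; [lia | specialize (IH Hin); lia].
Qed.

Lemma compact_cluster_point (K : P -> Prop) (s : nat -> P) :
  Defs.compact X K -> (forall k, K (s k)) ->
  exists y, K y /\ forall eps, eps > 0 -> forall N, exists k, (k >= N)%nat /\ d (s k) y < eps.
Proof.
  intros HK Hs; apply NNPP; intros Hno.
  (* otherwise every point of K has a ball [(y, e)] that the tail of [s] from [N] avoids *)
  set (U := fun (t : P * R * nat) (z : P) =>
    let '(y, e, N) := t in
    K y /\ e > 0 /\ (forall k, (k >= N)%nat -> d (s k) y >= e) /\ d y z < e).
  destruct (HK _ U) as [l Hl].
  - intros [[y e] N] z [Hy [He [HN Hz]]]; exists (e - d y z); split; [lra |].
    intros w Hw; repeat split; auto.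
    pose proof (dist_tri X y w z); rewrite (dist_sym X z w) in *; lra.
  - intros z Hz.
    assert (Hnz : ~ forall eps, eps > 0 -> forall N, exists k, (k >= N)%nat /\ d (s k) z < eps)
      by (intros H; apply Hno; eauto).
    apply not_all_ex_not in Hnz; destruct Hnz as [e Hnz].
    apply imply_to_and in Hnz; destruct Hnz as [He Hnz].
    apply not_all_ex_not in Hnz; destruct Hnz as [N HN].
    exists (z, e, N); simpl; repeat split; auto.
    + intros k Hk; apply Rnot_lt_ge; intros Hlt; apply HN; eauto.
    + rewrite dist_self; lra.
  - destruct (Hl (s (max_index l)) (Hs _)) as [[[y e] N] [Hin [_ [_ [HN Hz]]]]].
    apply max_index_ge in Hin; specialize (HN _ Hin); rewrite dist_sym in HN; lra.
Qed.

Lemma compact_subseq (K : P -> Prop) (s : nat -> P) :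
  Defs.compact X K -> (forall k, K (s k)) ->
  exists (sg : nat -> nat) y,
    (forall k, (k <= sg k)%nat) /\ K y /\ converges X (fun k => s (sg k)) y.
Proof.
  intros HK Hs; destruct (compact_cluster_point K s HK Hs) as [y [Hy Hcl]].
  assert (Hnear : forall k, exists k', (k' >= k)%nat /\ d (s k') y < / INR (S k))
    by (intros k; apply Hcl, inv_INR_S_pos).
  destruct (choice _ Hnear) as [sg Hsg].
  exists sg, y; split; [intros k; apply Hsg | split; auto].
  apply converges_of_inv_bound; intros k; apply Hsg.
Qed.

Lemma usc_limit_ge (u : P -> R) s y c :
  usc X u -> converges X s y ->
  (forall eps, eps > 0 -> exists N, forall k, (k >= N)%nat -> c - eps < u (s k)) ->
  c <= u y.
Proof.
  intros Hu Hs Hc; apply Rnot_lt_le; intros Hlt.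
  destruct (Hu y ((c - u y) / 2)) as [delta [Hdelta Hball]]; [lra |].
  destruct (Hs delta Hdelta) as [N1 HN1].
  destruct (Hc ((c - u y) / 2)) as [N2 HN2]; [lra |].
  specialize (HN1 (Nat.max N1 N2) ltac:(lia)); specialize (HN2 (Nat.max N1 N2) ltac:(lia)).
  rewrite dist_sym in HN1; specialize (Hball _ HN1); lra.
Qed.

Lemma compact_closed_subset (K C : P -> Prop) :
  Defs.compact X K -> (forall x, C x -> K x) -> Defs.open_set X (fun x => ~ C x) ->
  Defs.compact X C.
Proof.
  intros HK HCK Hopen I U HU Hcov.
  set (U' := fun o : option I => match o with Some i => U i | None => fun x => ~ C x end).
  destruct (HK _ U') as [l Hl].
  - intros [i |]; simpl; auto.
  - intros x Hx; destruct (classic (C x)) as [HC | HC].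
    + destruct (Hcov x HC) as [i Hi]; exists (Some i); exact Hi.
    + exists None; exact HC.
  - exists (flat_map (fun o => match o with Some i => i :: nil | None => nil end) l).
    intros x Hx; destruct (Hl x (HCK x Hx)) as [[i |] [Hin HU']]; [| contradiction].
    exists i; split; auto; apply in_flat_map; exists (Some i); simpl; auto.
Qed.

Variable m : nat.

Definition tuple_converges (s : nat -> Idx m -> P) (y : Idx m -> P) : Prop :=
  forall eps, eps > 0 -> exists N, forall k, (k >= N)%nat -> forall i, d (s k i) (y i) < eps.

Lemma compact_tuple_subseq_prefix (K : P -> Prop) (b : nat -> Idx m -> P) :
  Defs.compact X K -> (forall k i, K (b k i)) -> forall p,
  exists (sg : nat -> nat) y, (forall k, (k <= sg k)%nat) /\ (forall i, K (y i)) /\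
    forall eps, eps > 0 -> exists N, forall k, (k >= N)%nat ->
      forall i, (proj1_sig i < p)%nat -> d (b (sg k) i) (y i) < eps.
Proof.
  intros HK Hb p; induction p as [| p IH].
  - exists (fun k => k), (b 0%nat); repeat split; auto.
    intros eps _; exists 0%nat; intros k _ i Hi; lia.
  - destruct IH as [sg [y [Hsg [Hy Hconv]]]].
    destruct (Compare_dec.lt_dec p m) as [Hpm | Hpm].
    + destruct (compact_subseq K (fun k => b (sg k) (exist _ p Hpm)) HK (fun k => Hb _ _))
        as [tau [yp [Htau [Hyp Hconvp]]]].
      exists (fun k => sg (tau k)),
        (fun i => if Nat.eq_dec (proj1_sig i) p then yp else y i).
      split; [intros k; specialize (Htau k); specialize (Hsg (tau k)); lia |].
      split; [intros i; destruct (Nat.eq_dec (proj1_sig i) p); auto |].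
      intros eps He; destruct (Hconv eps He) as [N1 HN1]; destruct (Hconvp eps He) as [N2 HN2].
      exists (Nat.max N1 N2); intros k Hk [i hi] Hi; simpl in Hi |- *.
      destruct (Nat.eq_dec i p) as [-> | Hne].
      * rewrite (Peano_dec.le_unique _ _ hi Hpm); apply HN2; lia.
      * apply (HN1 (tau k)); [specialize (Htau k); lia | simpl; lia].
    + exists sg, y; repeat split; auto.
      intros eps He; destruct (Hconv eps He) as [N HN]; exists N.
      intros k Hk [i hi] Hi; apply HN; simpl in *; lia.
Qed.

Lemma compact_tuple_subseq (K : P -> Prop) (b : nat -> Idx m -> P) :
  Defs.compact X K -> (forall k i, K (b k i)) ->
  exists (sg : nat -> nat) y, (forall k, (k <= sg k)%nat) /\ (forall i, K (y i)) /\
    tuple_converges (fun k => b (sg k)) y.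
Proof.
  intros HK Hb; destruct (compact_tuple_subseq_prefix K b HK Hb m) as [sg [y [Hsg [Hy Hconv]]]].
  exists sg, y; repeat split; auto.
  intros eps He; destruct (Hconv eps He) as [N HN]; exists N.
  intros k Hk i; apply HN; [exact Hk | exact (proj2_sig i)].
Qed.

Lemma dmax_le (a b : Idx m -> P) c :
  0 <= c -> (forall i, d (a i) (b i) <= c) -> dmax X m a b <= c.
Proof.
  intros Hc Hab; unfold dmax; rewrite <- (Rmax_left c 0) by lra.
  apply sup01_le; intros r [i ->]; auto.
Qed.

Lemma continuous_m_tuple_converges (f : (Idx m -> P) -> P) s y :
  continuous_m X m f -> tuple_converges s y -> converges X (fun k => f (s k)) (f y).
Proof.
  intros Hf Hs eps He; destruct (Hf y eps He) as [delta [Hdelta Hball]].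
  destruct (Hs (delta / 2)) as [N HN]; [lra |].
  exists N; intros k Hk; rewrite dist_sym; apply Hball.
  apply Rle_lt_trans with (delta / 2); [| lra].
  apply dmax_le; [lra |]; intros i; rewrite dist_sym; left; apply HN, Hk.
Qed.

Lemma compact_image_limit (K : P -> Prop) (f : (Idx m -> P) -> P) b x :
  Defs.compact X K -> continuous_m X m f -> (forall k i, K (b k i)) ->
  converges X (fun k => f (b k)) x ->
  exists (sg : nat -> nat) y, (forall k, (k <= sg k)%nat) /\ (forall i, K (y i)) /\
    tuple_converges (fun k => b (sg k)) y /\ f y = x.
Proof.
  intros HK Hf Hb Hx; destruct (compact_tuple_subseq K b HK Hb) as [sg [y [Hsg [Hy Hconv]]]].
  exists sg, y; repeat split; auto.
  apply (converges_unique (fun k => f (b (sg k)))).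
  - exact (continuous_m_tuple_converges f _ y Hf Hconv).
  - exact (converges_reindex _ x sg Hsg Hx).
Qed.

End Metric.

Lemma fimg_ge {Z Y : Type} (f : Z -> Y) (w : Z -> R) z :
  (forall z', w z' <= 1) -> w z <= fimg f w (f z).
Proof.
  intros Hw; unfold fimg; destruct (excluded_middle_informative _) as [_ | Hno].
  - apply (sup01_ge _ 1); [intros r [z' [_ ->]]; apply Hw | eauto].
  - exfalso; eauto.
Qed.

Lemma fimg_in_01 {Z Y : Type} (f : Z -> Y) (w : Z -> R) y :
  (forall z, 0 <= w z <= 1) -> 0 <= fimg f w y <= 1.
Proof.
  intros Hw; unfold fimg; destruct (excluded_middle_informative _) as [[z Hz] | _]; [| lra].
  split.
  - apply Rle_trans with (w z); [apply Hw |].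
    apply (sup01_ge _ 1); [intros r [z' [_ ->]]; apply Hw | eauto].
  - rewrite <- (Rmax_left 1 0) by lra; apply sup01_le; intros r [z' [_ ->]]; apply Hw.
Qed.

Lemma fimg_gt {Z Y : Type} (f : Z -> Y) (w : Z -> R) y c :
  0 <= c -> c < fimg f w y -> exists z, f z = y /\ c < w z.
Proof.
  intros Hc Hlt; unfold fimg in Hlt; destruct (excluded_middle_informative _); [| lra].
  apply NNPP; intros Hno.
  assert (Hle : sup01 (fun r => exists z, f z = y /\ r = w z) <= Rmax c 0).
  { apply sup01_le; intros r [z [Hz ->]]; apply Rnot_lt_le; intros Hlt'; apply Hno; eauto. }
  rewrite Rmax_left in Hle by lra; lra.
Qed.

Lemma fprod_le_coord {Y : Type} m (u : Y -> R) a i :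
  (forall y, 0 <= u y) -> fprod m (fun _ => u) a <= u (a i).
Proof. intros Hu; apply (inf01_le _ 0); [intros r [i' ->]; apply Hu | exists i; auto]. Qed.

Lemma fprod_ge {Y : Type} m (u : Y -> R) a c :
  c <= 1 -> (forall i, c <= u (a i)) -> c <= fprod m (fun _ => u) a.
Proof. intros Hc Ha; apply inf01_ge; auto; intros r [i ->]; auto. Qed.

Lemma fprod_in_01 {Y : Type} m (u : Y -> R) a :
  (forall y, 0 <= u y <= 1) -> 0 <= fprod m (fun _ => u) a <= 1.
Proof. intros Hu; apply inf01_in_01; intros r [i ->]; apply Hu. Qed.

Lemma fprod_pos {Y : Type} m (u : Y -> R) a :
  (forall i, 0 < u (a i)) -> 0 < fprod m (fun _ => u) a.
Proof.
  intros Ha; destruct (Idx_pos_lower_bound m (fun i => u (a i)) Ha) as [c [Hc Hlow]].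
  apply Rlt_le_trans with c; [lra | apply fprod_ge; [lra | exact Hlow]].
Qed.

Lemma proper_rho_pos n rho j t :
  proper n rho -> (j < n)%nat -> 0 < t <= 1 -> 0 < rho j t.
Proof.
  intros [[Hadm _] Hpr] Hj Ht; destruct (Hadm j Hj) as [_ [Hmono _]].
  destruct (Hpr j Hj) as [[_ Hr_plus] _].
  apply Rnot_le_lt; intros Hle.
  (* [r_+ = 0]: were [rho j t = 0], [t] would bound [{s | rho j s > 0}] from below *)
  assert (t <= 0); [| lra].
  apply Hr_plus; intros s [Hs Hrs]; apply Rnot_lt_le; intros Hst.
  assert (rho j s <= rho j t) by (apply Hmono; lra); lra.
Qed.

Lemma proper_rho_eq_one n rho j t :
  proper n rho -> (j < n)%nat -> 0 <= t <= 1 -> 1 <= rho j t -> t = 1 /\ rho j 1 = 1.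
Proof.
  intros [[Hadm _] Hpr] Hj Ht Hrt; destruct (Hadm j Hj) as [Hrange [Hmono _]].
  destruct (Hpr j Hj) as [_ [Hbeta _]].
  assert (rho j t <= rho j 1) by (apply Hmono; lra).
  pose proof (Hrange 1 ltac:(lra)); split; [| lra].
  assert (1 <= t); [| lra].
  apply Hbeta; split; [lra | lra].
Qed.

Section FuzzyAttractor.
Variables (X : Metric_Space) (m n : nat).
Variables (phi : nat -> (Idx m -> Base X) -> Base X) (rho : nat -> R -> R) (u : Base X -> R).
Hypothesis rho_proper : proper n rho.
Hypothesis phi_cont : forall j, (j < n)%nat -> continuous_m X m (phi j).
Hypothesis u_Fstar : in_Fstar X u.
Hypothesis u_fixed : forall x, Zop X m n phi rho (fun _ => u) x = u x.

Local Notation img j := (fimg (phi j) (fprod m (fun _ => u))).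

Let u_01 : forall x, 0 <= u x <= 1 := proj1 u_Fstar.

Lemma img_in_01 j x : 0 <= img j x <= 1.
Proof. apply fimg_in_01; intros a; apply fprod_in_01, u_01. Qed.

Lemma u_eq_sup x : u x = sup01 (fun r => exists j, (j < n)%nat /\ r = rho j (img j x)).
Proof. rewrite <- u_fixed; reflexivity. Qed.

Lemma rho_img_in_01 j x : (j < n)%nat -> 0 <= rho j (img j x) <= 1.
Proof. intros Hj; apply (proj1 rho_proper), img_in_01; exact Hj. Qed.

Lemma rho_img_le j x : (j < n)%nat -> rho j (img j x) <= u x.
Proof.
  intros Hj; rewrite u_eq_sup; apply (sup01_ge _ 1); [| eauto].
  intros r [j' [Hj' ->]]; apply rho_img_in_01, Hj'.
Qed.

Lemma u_le_rho_img x : exists j, (j < n)%nat /\ u x <= rho j (img j x).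
Proof.
  destruct (proj2 (proj1 rho_proper)) as [j0 [Hj0 _]].
  destruct (sup01_le_finite_max (fun j => rho j (img j x)) n ltac:(lia)) as [j [Hj Hle]].
  - intros j Hj; apply rho_img_in_01, Hj.
  - exists j; split; auto; rewrite u_eq_sup; exact Hle.
Qed.

Lemma u_pos_img_pos x : 0 < u x -> exists j, (j < n)%nat /\ 0 < img j x.
Proof.
  intros Hx; destruct (u_le_rho_img x) as [j [Hj Hle]]; exists j; split; auto.
  destruct (proj1 (proj1 rho_proper) j Hj) as [_ [_ [_ Hrho0]]].
  pose proof (img_in_01 j x); destruct (Req_dec (img j x) 0) as [E |]; [| lra].
  rewrite E, Hrho0 in Hle; lra.
Qed.

Lemma u_one_img_one x : 1 <= u x -> exists j, ((j < n)%nat /\ rho j 1 = 1) /\ img j x = 1.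
Proof.
  intros Hx; destruct (u_le_rho_img x) as [j [Hj Hle]].
  destruct (proper_rho_eq_one n rho j (img j x) rho_proper Hj (img_in_01 j x)) as [E1 Er1];
    [lra |].
  exists j; auto.
Qed.

Lemma support_in_cut0 x : 0 < u x -> cut0 X u x.
Proof. intros Hx eps He; exists x; split; [exact Hx | rewrite dist_self; exact He]. Qed.

Lemma cut0_compact : Defs.compact X (cut0 X u).
Proof. exact (proj2 (proj2 (proj2 u_Fstar))). Qed.

Lemma image_in_cut0 j a :
  (j < n)%nat -> (forall i, cut0 X u (a i)) -> cut0 X u (phi j a).
Proof.
  intros Hj Ha eps He; destruct (phi_cont j Hj a eps He) as [delta [Hdelta Hball]].
  assert (Hnear : forall i, exists z, 0 < u z /\ dist X (a i) z < delta / 2).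
  { intros i; destruct (Ha i (delta / 2)) as [z [Hz Hdz]]; [lra | eauto]. }
  destruct (choice _ Hnear) as [b Hb].
  exists (phi j b); split.
  - assert (Hprod : 0 < fprod m (fun _ => u) b) by (apply fprod_pos; intros i; apply Hb).
    pose proof (fimg_ge (phi j) (fprod m (fun _ => u)) b
                  (fun a' => proj2 (fprod_in_01 m u a' u_01))).
    pose proof (proper_rho_pos n rho j (img j (phi j b)) rho_proper Hj
                  ltac:(pose proof (img_in_01 j (phi j b)); lra)).
    pose proof (rho_img_le j (phi j b) Hj); lra.
  - apply Hball, Rle_lt_trans with (delta / 2); [| lra].
    apply dmax_le; [lra | intros i; left; apply Hb].
Qed.

Lemma cut0_in_image x :
  cut0 X u x -> exists j, (j < n)%nat /\ exists y, (forall i, cut0 X u (y i)) /\ phi j y = x.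
Proof.
  intros Hx.
  assert (Happrox : forall k, exists p : nat * (Idx m -> Base X), (fst p < n)%nat /\
            dist X (phi (fst p) (snd p)) x < / INR (S k) /\ forall i, 0 < u (snd p i)).
  { intros k; destruct (Hx _ (inv_INR_S_pos k)) as [xk [Hxk Hd]].
    destruct (u_pos_img_pos xk Hxk) as [j [Hj Himg]].
    destruct (fimg_gt (phi j) _ xk 0 (Rle_refl 0) Himg) as [a [<- Ha]].
    exists (j, a); simpl; split; [exact Hj | split; [rewrite dist_sym; exact Hd |]].
    intros i; pose proof (fprod_le_coord m u a i (fun y => proj1 (u_01 y))); lra. }
  destruct (choice _ Happrox) as [g Hg].
  destruct (pigeonhole_infinitely_often n (fun k => fst (g k))) as [j [Hj Hoften]];
    [intros k; apply Hg |].
  destruct (choice _ Hoften) as [tau Htau].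
  set (b k := snd (g (tau k))).
  assert (Hconv : converges X (fun k => phi j (b k)) x).
  { apply converges_of_inv_bound; intros k; unfold b.
    destruct (Htau k) as [Hk <-]; destruct (Hg (tau k)) as [_ [Hd _]].
    apply Rlt_le_trans with (/ INR (S (tau k))); [exact Hd |].
    apply Rinv_le_contravar; [apply lt_0_INR; lia | apply le_INR; lia]. }
  destruct (compact_image_limit X m (cut0 X u) (phi j) b x cut0_compact (phi_cont j Hj)
              (fun k i => support_in_cut0 _ (proj2 (proj2 (Hg (tau k))) i)) Hconv)
    as [_ [y [_ [Hy [_ Hyx]]]]].
  exists j; split; [exact Hj | exists y; auto].
Qed.

Lemma cut0_hutch_fixed : hutch_fixed X m (fun j => (j < n)%nat) phi (cut0 X u).
Proof.
  intros x; split; [apply cut0_in_image |].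
  intros [j [Hj [a [Ha <-]]]]; exact (image_in_cut0 j a Hj Ha).
Qed.

Lemma cut1_in_image x :
  cut X u 1 x ->
  exists j, ((j < n)%nat /\ rho j 1 = 1) /\ exists y, (forall i, cut X u 1 (y i)) /\ phi j y = x.
Proof.
  intros Hx; destruct (u_one_img_one x (Rge_le _ _ Hx)) as [j [[Hj Hr1] Himg]].
  assert (Happrox : forall k, exists a, phi j a = x /\ forall i, 1 - / INR (S k) < u (a i)).
  { intros k; pose proof (inv_INR_S_le_1 k).
    destruct (fimg_gt (phi j) (fprod m (fun _ => u)) x (1 - / INR (S k)))
      as [a [Ha Hprod]]; [lra | rewrite Himg; pose proof (inv_INR_S_pos k); lra |].
    exists a; split; [exact Ha |].
    intros i; pose proof (fprod_le_coord m u a i (fun y => proj1 (u_01 y))); lra. }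
  destruct (choice _ Happrox) as [b Hb].
  assert (Hb0 : forall k i, cut0 X u (b k i)).
  { intros k i; apply support_in_cut0; pose proof (proj2 (Hb k) i).
    pose proof (inv_INR_S_le_1 k); lra. }
  assert (Hconst : converges X (fun k => phi j (b k)) x).
  { intros eps He; exists 0%nat; intros k _; rewrite (proj1 (Hb k)), dist_self; lra. }
  destruct (compact_image_limit X m (cut0 X u) (phi j) b x cut0_compact (phi_cont j Hj) Hb0 Hconst)
    as [sg [y [Hsg [_ [Hconv Hyx]]]]].
  exists j; split; [auto | exists y; split; [| exact Hyx]].
  intros i; unfold cut; apply Rle_ge.
  apply (usc_limit_ge X u (fun k => b (sg k) i)); [exact (proj1 (proj2 (proj2 u_Fstar))) | |].
  - intros eps He; destruct (Hconv eps He) as [N HN]; exists N; intros k Hk; apply HN, Hk.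
  - intros eps He; destruct (inv_INR_S_small eps He) as [N HN]; exists N; intros k Hk.
    specialize (HN (sg k) ltac:(specialize (Hsg k); lia)); pose proof (proj2 (Hb (sg k)) i); lra.
Qed.

Lemma image_in_cut1 j a :
  (j < n)%nat -> rho j 1 = 1 -> (forall i, cut X u 1 (a i)) -> cut X u 1 (phi j a).
Proof.
  intros Hj Hr1 Ha; unfold cut in *.
  assert (Hprod : 1 <= fprod m (fun _ => u) a)
    by (apply fprod_ge; [lra | intros i; apply Rge_le, Ha]).
  pose proof (fimg_ge (phi j) (fprod m (fun _ => u)) a
                (fun a' => proj2 (fprod_in_01 m u a' u_01))).
  pose proof (img_in_01 j (phi j a)).
  assert (E : img j (phi j a) = 1) by lra.
  pose proof (rho_img_le j (phi j a) Hj); rewrite E, Hr1 in *; lra.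
Qed.

Lemma cut1_hutch_fixed :
  hutch_fixed X m (fun j => (j < n)%nat /\ rho j 1 = 1) phi (cut X u 1).
Proof.
  intros x; split; [apply cut1_in_image |].
  intros [j [[Hj Hr1] [a [Ha <-]]]]; exact (image_in_cut1 j a Hj Hr1 Ha).
Qed.

Lemma cut1_compact : Defs.compact X (cut X u 1).
Proof.
  apply (compact_closed_subset X (cut0 X u)); [exact cut0_compact | |].
  - intros x Hx; apply support_in_cut0; unfold cut in Hx; lra.
  - intros x Hx; unfold cut in Hx.
    destruct (proj1 (proj2 (proj2 u_Fstar)) x (1 - u x)) as [delta [Hdelta Hball]]; [lra |].
    exists delta; split; [exact Hdelta |]; intros y Hy; specialize (Hball y Hy); unfold cut; lra.
Qed.

End FuzzyAttractor.

Theorem mainTheorem17 (X : Metric_Space) (m n : nat)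
  (phi : nat -> (Idx m -> Base X) -> Base X) (rho : nat -> R -> R)
  (uZ : Base X -> R) (A A' : Base X -> Prop) :
  complete X ->
  (forall j, (j < n)%nat -> continuous_m X m (phi j)) ->
  (forall j, (j < n)%nat -> matkowski X m (phi j)) ->
  proper n rho ->
  is_fuzzy_attractor X m n phi rho uZ ->
  is_attractor X m (fun j => (j < n)%nat) phi A ->
  is_attractor X m (fun j => (j < n)%nat /\ rho j 1 = 1) phi A' ->
  (forall x, cut0 X uZ x <-> A x) /\ (forall x, cut X uZ 1 x <-> A' x).
Proof.
  (* completeness and contractivity only serve to make the attractors exist,
     which [is_attractor] already provides together with their uniqueness *)
  intros _ Hcont _ Hproper [HF [Hfix _]] [_ [_ [_ HA]]] [_ [_ [_ HA']]].
  destruct (proj1 (proj2 HF)) as [x1 Hx1].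
  split; intros x.
  - apply HA; [| apply cut0_compact, HF | exact (cut0_hutch_fixed X m n phi rho uZ Hproper Hcont HF Hfix)].
    exists x1; apply support_in_cut0; lra.
  - apply HA'; [| apply cut1_compact, HF | exact (cut1_hutch_fixed X m n phi rho uZ Hproper Hcont HF Hfix)].
    exists x1; unfold cut; lra.
Qed.
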